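(* Let $G$ be a connected graph whose vertex set is partitioned into three stable sets $X$, $Y$, $Z$ such that every vertex of $Y$ is adjacent to every vertex of $Z$, and suppose that every vertex of $X$ has at least one neighbour in $Y$ and at least one neighbour in $Z$. Then $G$ has the de Bruijn-Erd\H{o}s property: the metric space $(V(G), d_G)$ has a universal line or at least $|V(G)|$ distinct lines.
   Context: $d_G$ is the shortest-path distance of $G$. In a metric space $(V,\rho)$, an element $b$ is between $a$ and $c$ if $\rho(a,b)+\rho(b,c)=\rho(a,c)$; three elements are collinear if one of them is between the other two. For distinct $a,b\in V$, the line generated by $a$ and $b$ is the set consisting of $a$, $b$, and all elements $c$ such that $a,b,c$ are collinear. A line is universal if it equals the whole ground set $V$. *)

From mathcomp Require Import all_boot.
Set Implicit Arguments. Unset Strict Implicit. Unset Printing Implicit Defensive.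

Definition simple_graph (T : finType) (e : rel T) : Prop :=
  symmetric e /\ irreflexive e.

Definition connected_graph (T : finType) (e : rel T) : Prop :=
  forall x y : T, connect e x y.

Fixpoint ball (T : finType) (e : rel T) (x : T) (n : nat) : {set T} :=
  match n with
  | 0 => [set x]
  | n'.+1 => ball e x n' :|: [set y | [exists z in ball e x n', e z y]]
  end.

(* Shortest-path distance d_G(x,y): the least n such that y is reachable
   from x within n steps (searched in 0 .. #|T|-1, which suffices for
   connected graphs). *)
Definition dist (T : finType) (e : rel T) (x y : T) : nat :=
  find (fun n => y \in ball e x n) (iota 0 #|T|).

Definition between (T : finType) (e : rel T) (a b c : T) : bool :=
  dist e a b + dist e b c == dist e a c.

Definition collinear (T : finType) (e : rel T) (a b c : T) : bool :=
  [|| between e a b c, between e b a c | between e a c b].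

Definition line (T : finType) (e : rel T) (a b : T) : {set T} :=
  [set c | [|| c == a, c == b | collinear e a b c]].

Definition lines (T : finType) (e : rel T) : {set {set T}} :=
  [set line e ab.1 ab.2 | ab in [set ab : T * T | ab.1 != ab.2]].

Definition universal_line (T : finType) (e : rel T) (L : {set T}) : bool :=
  L == [set: T].

Definition dBE_property (T : finType) (e : rel T) : Prop :=
  (exists a b : T, a != b /\ universal_line e (line e a b)) \/ #|T| <= #|lines e|.

Definition stable (T : finType) (e : rel T) (S : {set T}) : bool :=
  [forall x in S, forall y in S, ~~ e x y].

From mathcomp Require Import all_boot.
Set Implicit Arguments. Unset Strict Implicit. Unset Printing Implicit Defensive.

(* Distances in G are determined by the parts and the adjacencies: d(y, z) = 1
   for y in Y and z in Z, distinct vertices of Y (or of Z) are at distance 2,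
   d(x, w) is 1 or 2 for x in X and w outside X, and distinct vertices of X are
   at distance 2 or 3 according to whether they have a common neighbour.  Hence
   every line has an explicit description.  Assuming that no line is universal,
   we map V(G) injectively into the set of lines.  Unless |Y| = |Z| = 2, fix
   x0 in X with neighbours y0 in Y and z0 in Z, and y1 in Y, a non-neighbour of
   x0 if there is one (up to exchanging Y and Z); send x0 to line(y0, z0), y1 to
   line(x0, y0), z0 to line(x0, z0), and every other vertex of X, Y, Z to its
   line with x0, y1, z0 respectively.  When |Y| = |Z| = 2 the pencil of lines
   through x0 is completed by five lines chosen according to how X is joined to
   Y and Z.  Two of these lines are told apart by a single vertex, except in a
   few cases where their equality would make a third line universal. *)

Section Distance.
Variables (T : finType) (e : rel T).

Definition has_common_nbr u v := [exists w, e u w && e w v].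

Lemma common_nbrI u w v : e u w -> e w v -> has_common_nbr u v.
Proof. by move=> Huw Hwv; apply/existsP; exists w; rewrite Huw. Qed.

Lemma mem_ball0 u v : (v \in ball e u 0) = (v == u).
Proof. exact: in_set1. Qed.

Lemma mem_ballS u n v :
  (v \in ball e u n.+1) = (v \in ball e u n) || [exists z in ball e u n, e z v].
Proof. by rewrite /= !inE. Qed.

Lemma ball_succ u n z v : z \in ball e u n -> e z v -> v \in ball e u n.+1.
Proof.
by move=> Hz Hzv; rewrite mem_ballS; apply/orP; right; apply/existsP; exists z; rewrite Hz.
Qed.

Lemma mem_ball1 u v : (v \in ball e u 1) = (v == u) || e u v.
Proof.
rewrite mem_ballS inE; congr (_ || _); apply/existsP/idP => [[z /andP [/set1P -> //]]|].
by exists u; rewrite set11.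
Qed.

Lemma mem_ball2 u v : (v \in ball e u 2) = [|| v == u, e u v | has_common_nbr u v].
Proof.
rewrite mem_ballS mem_ball1.
have -> : [exists z in ball e u 1, e z v] = e u v || has_common_nbr u v.
  apply/existsP/orP => [[z /andP []]|[Huv|/existsP [z /andP [Huz Hzv]]]].
  - rewrite mem_ball1 => /orP [/eqP -> ->|Huz Hzv]; first by left.
    by right; apply/existsP; exists z; rewrite Huz.
  - by exists u; rewrite mem_ball1 eqxx.
  - by exists z; rewrite mem_ball1 Huz orbT.
by case: (v == u); case: (e u v).
Qed.

Lemma ball_stable u n m :
  ball e u n.+1 = ball e u n -> n <= m -> ball e u m = ball e u n.
Proof.
move=> Hn; elim: m => [|m IH]; first by rewrite leqn0 => /eqP ->.
rewrite leq_eqVlt => /orP [/eqP -> //|]; rewrite ltnS => /IH {}IH.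
by rewrite [LHS]/= IH -[in RHS]Hn.
Qed.

(* [dist] only searches the radii below [#|T|]; since the balls grow strictly
   until [v] is reached, the first radius reaching [v] is in that range. *)
Lemma first_reach_lt_card u v k :
  v \in ball e u k -> (forall j, j < k -> v \notin ball e u j) -> k < #|T|.
Proof.
move=> Hk Hnot; apply: (leq_trans _ (max_card (mem (ball e u k)))).
have grow j : j <= k -> j < #|ball e u j|.
  elim: j => [_|j IH Hj]; first by rewrite cards1.
  apply: (leq_ltn_trans (IH (ltnW Hj))); apply: proper_card.
  rewrite properEneq subsetUl andbT; apply/eqP => Hst; move: (Hnot j Hj).
  by rewrite -(ball_stable (esym Hst) (ltnW Hj)) Hk.
exact: grow.
Qed.

Lemma dist_first_reach u v k :
  v \in ball e u k -> (forall j, j < k -> v \notin ball e u j) -> dist e u v = k.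
Proof.
move=> Hk Hnot; have HkT := first_reach_lt_card Hk Hnot.
rewrite /dist; set P := fun n => v \in ball e u n; set s := iota 0 #|T|.
have Hsz : size s = #|T| by rewrite size_iota.
case: (ltngtP (find P s) k) => // [Hlt|Hgt].
- have Hfind : find P s < #|T| by rewrite (ltn_trans Hlt).
  have Hhas : has P s by rewrite has_find Hsz.
  by have := nth_find 0 Hhas; rewrite nth_iota // add0n /P (negbTE (Hnot _ Hlt)).
- by have := before_find 0 Hgt; rewrite nth_iota // add0n /P Hk.
Qed.

Lemma dist_refl u : dist e u u = 0.
Proof. by apply: dist_first_reach => [|[]]; rewrite ?mem_ball0. Qed.

Lemma dist_adj u v : u != v -> e u v -> dist e u v = 1.
Proof.
move=> Huv Hadj; apply: dist_first_reach => [|[|//] _]; first by rewrite mem_ball1 Hadj orbT.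
by rewrite mem_ball0 eq_sym.
Qed.

Lemma dist_common_nbr u v :
  u != v -> ~~ e u v -> has_common_nbr u v -> dist e u v = 2.
Proof.
move=> Huv Hnadj Hcn; apply: dist_first_reach => [|[|[|//]] _].
- by rewrite mem_ball2 Hcn !orbT.
- by rewrite mem_ball0 eq_sym.
- by rewrite mem_ball1 eq_sym negb_or Huv.
Qed.

Lemma dist_three u a b v : u != v -> ~~ e u v -> ~~ has_common_nbr u v ->
  e u a -> e a b -> e b v -> dist e u v = 3.
Proof.
move=> Huv Hnadj Hncn Hua Hab Hbv; apply: dist_first_reach => [|[|[|[|//]]] _].
- apply: (ball_succ _ Hbv); apply: (ball_succ _ Hab).
  by apply: (ball_succ _ Hua); rewrite mem_ball0.
- by rewrite mem_ball0 eq_sym.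
- by rewrite mem_ball1 eq_sym negb_or Huv.
- by rewrite mem_ball2 eq_sym !negb_or Huv Hnadj.
Qed.

End Distance.

Section Lines.
Variables (T : finType) (e : rel T).

Lemma mem_lineE a b c : (c \in line e a b) =
  [|| c == a, c == b, dist e a b + dist e b c == dist e a c,
      dist e b a + dist e a c == dist e b c | dist e a c + dist e c b == dist e a b].
Proof. by rewrite inE. Qed.

Lemma mem_lineL a b : a \in line e a b.
Proof. by rewrite mem_lineE eqxx. Qed.

Lemma mem_lineR a b : b \in line e a b.
Proof. by rewrite mem_lineE eqxx orbT. Qed.

Lemma line_sym a b : (forall u v, dist e u v = dist e v u) -> line e a b = line e b a.
Proof.
move=> dsym; apply/setP => c; rewrite !mem_lineE (dsym b a) (dsym c b) (dsym c a).
rewrite (addnC (dist e a c)).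
by case: (c == a); case: (c == b); case: (_ == dist e a c); case: (_ == dist e b c).
Qed.

Definition sparse (P : {set T}) m :=
  forall u v, u \in P -> v \in P -> u != v -> m <= dist e u v < m.*2.

Lemma mem_line_sparse (P : {set T}) m a b w : sparse P m ->
  a \in P -> b \in P -> w \in P -> a != b -> (w \in line e a b) = (w == a) || (w == b).
Proof.
move=> HP Ha Hb Hw Hab; rewrite mem_lineE.
case: (eqVneq w a) => [//|Hwa]; case: (eqVneq w b) => [//|Hwb] /=.
have no_between u v u' v' x y : u \in P -> v \in P -> u' \in P -> v' \in P -> x \in P -> y \in P ->
  u != v -> u' != v' -> x != y -> dist e u v + dist e u' v' == dist e x y = false.
  move=> Hu Hv Hu' Hv' Hx Hy Huv Huv' Hxy; apply/negbTE; rewrite neq_ltn; apply/orP; right.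
  have [_ Hlt] := andP (HP _ _ Hx Hy Hxy); apply: (leq_trans Hlt).
  have [Hm _] := andP (HP _ _ Hu Hv Huv); have [Hm' _] := andP (HP _ _ Hu' Hv' Huv').
  by rewrite -addnn leq_add.
by rewrite !no_between // ?(eq_sym b) ?(eq_sym a) // eq_sym.
Qed.

Lemma line_injr_sparse (P : {set T}) m a b b' : sparse P m ->
  a \in P -> b \in P -> b' \in P -> a != b -> a != b' -> b != b' -> line e a b != line e a b'.
Proof.
move=> HP Ha Hb Hb' Hab Hab' Hbb'; apply/eqP => /setP /(_ b).
by rewrite !(mem_line_sparse HP) // eqxx orbT eq_sym (negbTE Hab) (negbTE Hbb').
Qed.

Lemma set_neq_mem (A B : {set T}) w : (w \in A) != (w \in B) -> A != B.
Proof. by apply: contraNneq => ->. Qed.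

Lemma line_in_lines a b : a != b -> line e a b \in lines e.
Proof. by move=> Hab; apply/imsetP; exists (a, b); rewrite ?inE. Qed.

Lemma leq_card_lines (f : T -> {set T}) :
  injective f -> (forall v, f v \in lines e) -> #|T| <= #|lines e|.
Proof.
move=> f_inj f_lines; rewrite -(card_imset (mem T) f_inj); apply: subset_leq_card.
by apply/subsetP => L /imsetP [v _ ->].
Qed.

End Lines.

Lemma inj_by_rank (A B : eqType) (f : A -> B) (r : A -> nat) :
  (forall u v, r u <= r v -> u != v -> f u != f v) -> injective f.
Proof.
move=> Hf u v Euv; case: (eqVneq u v) => // Nuv; exfalso.
have [Hle|/ltnW Hle] := leqP (r u) (r v).
  by move: (Hf _ _ Hle Nuv); rewrite Euv eqxx.
by move: (Hf _ _ Hle); rewrite eq_sym Nuv Euv eqxx => /(_ isT).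
Qed.

Lemma neq_mem (T : finType) (A : {set T}) u v : u \in A -> (v \in A) = false -> (u == v) = false.
Proof. by move=> Hu; apply: contraFF => /eqP <-. Qed.

Lemma stable_adj (T : finType) (e : rel T) (A : {set T}) u v :
  stable e A -> u \in A -> v \in A -> e u v = false.
Proof. by move=> /forall_inP /(_ u) HA Hu Hv; apply/negbTE; move/forall_inP: (HA Hu); apply. Qed.

Record tripartite (T : finType) (e : rel T) (X Y Z : {set T}) : Prop := Tripartite {
  tp_sym : symmetric e;
  tp_Y0 : Y != set0;
  tp_Z0 : Z != set0;
  tp_disjXY : [disjoint X & Y];
  tp_disjYZ : [disjoint Y & Z];
  tp_disjXZ : [disjoint X & Z];
  tp_cover : X :|: Y :|: Z = [set: T];
  tp_stableX : stable e X;
  tp_stableY : stable e Y;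
  tp_stableZ : stable e Z;
  tp_adjYZ : forall y z, y \in Y -> z \in Z -> e y z;
  tp_nbrY : forall x, x \in X -> exists2 y, y \in Y & e x y;
  tp_nbrZ : forall x, x \in X -> exists2 z, z \in Z & e x z
}.

Lemma tripartite_swap (T : finType) (e : rel T) X Y Z :
  tripartite e X Y Z -> tripartite e X Z Y.
Proof.
case=> Hsym HY HZ HXY HYZ HXZ Hcov HsX HsY HsZ HadjYZ HnbrY HnbrZ.
split => //; first by rewrite disjoint_sym.
- by rewrite -setUA (setUC Z) setUA.
- by move=> z y Hz Hy; rewrite Hsym HadjYZ.
Qed.

Section Tripartite.
Variables (T : finType) (e : rel T) (X Y Z : {set T}).
Hypothesis tp : tripartite e X Y Z.

Lemma adj_sym u v : e u v = e v u.
Proof. exact: (tp_sym tp). Qed.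

Lemma partP w : [\/ w \in X, w \in Y | w \in Z].
Proof.
have : w \in X :|: Y :|: Z by rewrite (tp_cover tp) inE.
by rewrite !inE -orbA => /or3P.
Qed.

Lemma notX_Y w : w \in Y -> (w \in X) = false. Proof. exact: disjointFl (tp_disjXY tp). Qed.
Lemma notX_Z w : w \in Z -> (w \in X) = false. Proof. exact: disjointFl (tp_disjXZ tp). Qed.
Lemma notY_X w : w \in X -> (w \in Y) = false. Proof. exact: disjointFr (tp_disjXY tp). Qed.
Lemma notY_Z w : w \in Z -> (w \in Y) = false. Proof. exact: disjointFl (tp_disjYZ tp). Qed.
Lemma notZ_X w : w \in X -> (w \in Z) = false. Proof. exact: disjointFr (tp_disjXZ tp). Qed.
Lemma notZ_Y w : w \in Y -> (w \in Z) = false. Proof. exact: disjointFr (tp_disjYZ tp). Qed.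

Lemma adj_XX u v : u \in X -> v \in X -> e u v = false.
Proof. exact: stable_adj (tp_stableX tp). Qed.
Lemma adj_YY u v : u \in Y -> v \in Y -> e u v = false.
Proof. exact: stable_adj (tp_stableY tp). Qed.
Lemma adj_YZ u v : u \in Y -> v \in Z -> e u v. Proof. exact: (tp_adjYZ tp). Qed.
Lemma adj_ZY u v : u \in Z -> v \in Y -> e u v. Proof. by move=> Hu Hv; rewrite adj_sym adj_YZ. Qed.

Lemma common_nbr_sym u v : has_common_nbr e u v = has_common_nbr e v u.
Proof.
by apply/existsP/existsP => -[w /andP [H1 H2]]; exists w; rewrite adj_sym H2 adj_sym H1.
Qed.

Lemma common_nbr_notXX u v :
  ~~ e u v -> (u \notin X) || (v \notin X) -> has_common_nbr e u v.
Proof.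
wlog HuX : u v / u \notin X.
  move=> wlog Huv /orP [Hu|Hv]; first by apply: wlog; rewrite ?Hu.
  by rewrite common_nbr_sym; apply: wlog; rewrite 1?adj_sym ?Hv.
move=> Huv _; case/set0Pn: (tp_Y0 tp) => y0 Hy0; case/set0Pn: (tp_Z0 tp) => z0 Hz0.
case: (partP u) => Hu; first by rewrite Hu in HuX.
- case: (partP v) => Hv.
  + have [z Hz Hvz] := tp_nbrZ tp Hv.
    by apply: (common_nbrI (adj_YZ Hu Hz)); rewrite adj_sym.
  + exact: (common_nbrI (adj_YZ Hu Hz0) (adj_ZY Hz0 Hv)).
  + by rewrite adj_YZ in Huv.
- case: (partP v) => Hv.
  + have [y Hy Hvy] := tp_nbrY tp Hv.
    by apply: (common_nbrI (adj_ZY Hu Hy)); rewrite adj_sym.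
  + by rewrite adj_ZY in Huv.
  + exact: (common_nbrI (adj_ZY Hu Hy0) (adj_YZ Hy0 Hv)).
Qed.

Lemma distE u v : dist e u v =
  if u == v then 0 else if e u v then 1
  else if [&& u \in X, v \in X & ~~ has_common_nbr e u v] then 3 else 2.
Proof.
case: eqVneq => [->|Huv]; first exact: dist_refl.
case: ifP => Hadj; first exact: dist_adj.
case: ifP => [/and3P [Hu Hv Hncn]|Hfar].
  have [y Hy Huy] := tp_nbrY tp Hu; have [z Hz Hvz] := tp_nbrZ tp Hv.
  by apply: (dist_three _ _ _ Huy (adj_YZ Hy Hz)); rewrite ?Hadj // adj_sym.
apply: dist_common_nbr; rewrite ?Hadj //; apply: contraFT Hfar => Hncn.
move: (common_nbr_notXX (negbT Hadj)); rewrite (negbTE Hncn) andbT.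
by case: (u \in X); case: (v \in X) => // /(_ isT).
Qed.

Lemma dist_sym u v : dist e u v = dist e v u.
Proof. by rewrite !distE eq_sym adj_sym common_nbr_sym andbCA. Qed.

Lemma dist_XX u v : u \in X -> v \in X ->
  dist e u v = if u == v then 0 else if has_common_nbr e u v then 2 else 3.
Proof. by move=> Hu Hv; rewrite distE (adj_XX Hu Hv) Hu Hv; case: has_common_nbr. Qed.

Lemma dist_YY u v : u \in Y -> v \in Y -> dist e u v = if u == v then 0 else 2.
Proof. by move=> Hu Hv; rewrite distE (adj_YY Hu Hv) (notX_Y Hu). Qed.

Lemma dist_YZ u v : u \in Y -> v \in Z -> dist e u v = 1.
Proof. by move=> Hu Hv; rewrite distE (adj_YZ Hu Hv) (neq_mem Hu (notY_Z Hv)). Qed.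

Lemma dist_ZY u v : u \in Z -> v \in Y -> dist e u v = 1.
Proof. by move=> Hu Hv; rewrite dist_sym dist_YZ. Qed.

Lemma dist_Xout u v : u \in X -> v \notin X -> dist e u v = if e u v then 1 else 2.
Proof.
by move=> Hu /negbTE Hv; rewrite distE (neq_mem Hu Hv) Hv andbF; case: (e u v).
Qed.

Lemma dist_outX u v : u \notin X -> v \in X -> dist e u v = if e v u then 1 else 2.
Proof. by move=> Hu Hv; rewrite dist_sym dist_Xout. Qed.

End Tripartite.

Section TripartiteLines.
Variables (T : finType) (e : rel T) (X Y Z : {set T}).
Hypothesis tp : tripartite e X Y Z.
Let tp' := tripartite_swap tp.

Lemma dist_ZZ u v : u \in Z -> v \in Z -> dist e u v = if u == v then 0 else 2.
Proof. exact: (dist_YY tp'). Qed.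

Lemma sparse_X : sparse e X 2.
Proof. by move=> u v Hu Hv Huv; rewrite (dist_XX tp Hu Hv) (negbTE Huv); case: ifP. Qed.

Lemma sparse_Y : sparse e Y 2.
Proof. by move=> u v Hu Hv Huv; rewrite (dist_YY tp Hu Hv) (negbTE Huv). Qed.

Lemma mem_line_XX_X x x' w : x \in X -> x' \in X -> w \in X -> x != x' ->
  (w \in line e x x') = (w == x) || (w == x').
Proof. exact: mem_line_sparse sparse_X. Qed.

Lemma mem_line_YY_Y y y' w : y \in Y -> y' \in Y -> w \in Y -> y != y' ->
  (w \in line e y y') = (w == y) || (w == y').
Proof. exact: mem_line_sparse sparse_Y. Qed.

Lemma mem_line_XX_out x x' w : x \in X -> x' \in X -> w \notin X -> x != x' ->
  (w \in line e x x') = if has_common_nbr e x x' then e x w && e x' w else e x w || e x' w.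
Proof.
move=> Hx Hx' Hw Hxx'; rewrite mem_lineE (dist_XX tp Hx Hx') (dist_XX tp Hx' Hx).
rewrite (eq_sym x') (negbTE Hxx') (common_nbr_sym tp x') !(eq_sym w).
rewrite (neq_mem Hx (negbTE Hw)) (neq_mem Hx' (negbTE Hw)).
rewrite (dist_Xout tp Hx Hw) (dist_Xout tp Hx' Hw) (dist_outX tp Hw Hx').
case Hcn: has_common_nbr; case Hxw: (e x w); case Hx'w: (e x' w) => //.
have Hwx' : e w x' by rewrite (adj_sym tp).
by rewrite (common_nbrI Hxw Hwx') in Hcn.
Qed.

Lemma mem_line_YY_Z y y' w : y \in Y -> y' \in Y -> w \in Z -> y != y' -> w \in line e y y'.
Proof.
move=> Hy Hy' Hw Hyy'; rewrite mem_lineE (dist_YY tp Hy Hy') (negbTE Hyy').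
by rewrite (dist_YZ tp Hy Hw) (dist_ZY tp Hw Hy') !orbT.
Qed.

Lemma mem_line_YY_X y y' w : y \in Y -> y' \in Y -> w \in X -> y != y' ->
  (w \in line e y y') = e w y && e w y'.
Proof.
move=> Hy Hy' Hw Hyy'; have HyX := negbT (notX_Y tp Hy); have Hy'X := negbT (notX_Y tp Hy').
rewrite mem_lineE (dist_YY tp Hy Hy') (dist_YY tp Hy' Hy) (eq_sym y') (negbTE Hyy').
rewrite (dist_outX tp HyX Hw) (dist_outX tp Hy'X Hw) (dist_Xout tp Hw Hy'X).
rewrite (neq_mem Hw (notX_Y tp Hy)) (neq_mem Hw (notX_Y tp Hy')).
by case: (e w y); case: (e w y').
Qed.

Lemma mem_line_YZ_X y z w : y \in Y -> z \in Z -> w \in X ->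
  (w \in line e y z) = (e w y != e w z).
Proof.
move=> Hy Hz Hw; have HyX := negbT (notX_Y tp Hy); have HzX := negbT (notX_Z tp Hz).
rewrite mem_lineE (dist_YZ tp Hy Hz) (dist_ZY tp Hz Hy).
rewrite (dist_outX tp HyX Hw) (dist_outX tp HzX Hw) (dist_Xout tp Hw HzX).
rewrite (neq_mem Hw (notX_Y tp Hy)) (neq_mem Hw (notX_Z tp Hz)).
by case: (e w y); case: (e w z).
Qed.

Lemma mem_line_YZ_out y z w : y \in Y -> z \in Z -> w \notin X -> w \in line e y z.
Proof.
move=> Hy Hz Hw; rewrite mem_lineE (dist_YZ tp Hy Hz) (dist_ZY tp Hz Hy).
case: (partP tp w) => Hw'; first by rewrite Hw' in Hw.
- rewrite (dist_YY tp Hy Hw') (dist_ZY tp Hz Hw') (dist_YZ tp Hw' Hz) (eq_sym w y).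
  by case: (y == w); rewrite ?orbT.
- rewrite (dist_YZ tp Hy Hw') (dist_ZZ Hz Hw') (dist_ZZ Hw' Hz) (eq_sym w z).
  by case: (z == w); rewrite ?orbT.
Qed.

Lemma mem_line_XY_Y x y w : x \in X -> y \in Y -> w \in Y ->
  (w \in line e x y) = if e x y then e x w else w == y.
Proof.
move=> Hx Hy Hw; have HyX := negbT (notX_Y tp Hy); have HwX := negbT (notX_Y tp Hw).
rewrite mem_lineE (dist_Xout tp Hx HyX) (dist_Xout tp Hx HwX) (dist_outX tp HyX Hx).
rewrite (dist_YY tp Hy Hw) (dist_YY tp Hw Hy) (neq_mem Hw (notY_X tp Hx)) (eq_sym y).
by case: (eqVneq w y) => [->|_]; case: (e x y); case: (e x w); rewrite ?orbT.
Qed.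

Lemma mem_line_XY_Z x y w : x \in X -> y \in Y -> w \in Z ->
  (w \in line e x y) = (e x w != e x y).
Proof.
move=> Hx Hy Hw; have HyX := negbT (notX_Y tp Hy); have HwX := negbT (notX_Z tp Hw).
rewrite mem_lineE (dist_Xout tp Hx HyX) (dist_Xout tp Hx HwX) (dist_outX tp HyX Hx).
rewrite (dist_YZ tp Hy Hw) (dist_ZY tp Hw Hy).
rewrite (neq_mem Hw (notZ_X tp Hx)) (neq_mem Hw (notZ_Y tp Hy)).
by case: (e x y); case: (e x w).
Qed.

Lemma mem_line_XY_X x y w : x \in X -> y \in Y -> w \in X ->
  (w \in line e x y) =
  (w == x) || if e x y then e w y || ~~ has_common_nbr e x w
              else e w y && ~~ has_common_nbr e x w.
Proof.
move=> Hx Hy Hw; have HyX := negbT (notX_Y tp Hy).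
rewrite mem_lineE (dist_Xout tp Hx HyX) (dist_outX tp HyX Hx) (dist_outX tp HyX Hw).
rewrite (dist_XX tp Hx Hw) (dist_Xout tp Hw HyX) (neq_mem Hw (notX_Y tp Hy)) eq_sym.
case: (eqVneq w x) => //= _.
case Hwy: (e w y); case Hcn: (has_common_nbr e x w); case Hxy: (e x y) => //.
have Hyw : e y w by rewrite (adj_sym tp).
by rewrite (common_nbrI Hxy Hyw) in Hcn.
Qed.

Lemma nbr_pairY y1 y2 w : Y \subset [set y1; y2] -> w \in X -> e w y1 || e w y2.
Proof. by move=> HY /(tp_nbrY tp) [v /(subsetP HY) /set2P [] -> ->]; rewrite ?orbT. Qed.

End TripartiteLines.

Definition complete_to_compl (T : finType) (e : rel T) (X : {set T}) : Prop :=
  forall u w, u \in X -> w \notin X -> e u w.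

Section DistinctLines.
Variables (T : finType) (e : rel T) (X Y Z : {set T}).
Hypothesis tp : tripartite e X Y Z.
Hypothesis no_univ : forall a b, a != b -> line e a b != [set: T].
Let tp' := tripartite_swap tp.

Lemma lineC a b : line e a b = line e b a.
Proof. exact: line_sym (dist_sym tp). Qed.

Lemma line_not_univ a b : a != b -> ~ (forall w, w \in line e a b).
Proof. by move=> /no_univ /eqP Hab Hall; apply: Hab; apply/setP => w; rewrite Hall inE. Qed.

Lemma line_XX_neq_XY x0 x y : x0 \in X -> x \in X -> y \in Y -> x0 != x ->
  line e x0 x != line e x0 y.
Proof.
move=> Hx0 Hx Hy Hx0x; have HyX := negbT (notX_Y tp Hy).
have [y' Hy' Hx0y'] := tp_nbrY tp Hx0; have [z0 Hz0 Hx0z0] := tp_nbrZ tp Hx0.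
have [z Hz Hxz] := tp_nbrZ tp Hx.
have XXout w (Hw : w \notin X) := mem_line_XX_out tp Hx0 Hx Hw Hx0x.
case Hcn: (has_common_nbr e x0 x); case Hx0y: (e x0 y).
- apply: (set_neq_mem (w := z)).
  rewrite XXout ?(notX_Z tp Hz) // Hcn Hxz andbT (mem_line_XY_Z tp Hx0 Hy Hz) Hx0y.
  by case: (e x0 z).
- apply: (set_neq_mem (w := y)).
  by rewrite XXout // Hcn Hx0y (mem_line_XY_Y tp Hx0 Hy Hy) Hx0y eqxx.
- apply: (set_neq_mem (w := z0)).
  by rewrite XXout ?(notX_Z tp Hz0) // (mem_line_XY_Z tp Hx0 Hy Hz0) Hcn Hx0z0 Hx0y.
- have Hy'y : y' != y by apply: contraFneq Hx0y => <-.
  apply: (set_neq_mem (w := y')).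
  by rewrite XXout ?(notX_Y tp Hy') // Hcn Hx0y' (mem_line_XY_Y tp Hx0 Hy Hy') Hx0y (negbTE Hy'y).
Qed.

Lemma line_XX_neq_YY_nadj x0 x y1 y2 : x0 \in X -> x \in X -> y1 \in Y -> y2 \in Y ->
  x0 != x -> y1 != y2 -> ~~ (e x0 y1 && e x0 y2) -> line e x0 x != line e y1 y2.
Proof.
move=> Hx0 Hx Hy1 Hy2 Hx0x Hy12 Hnadj; apply: (set_neq_mem (w := x0)).
by rewrite mem_lineL (mem_line_YY_X tp Hy1 Hy2 Hx0 Hy12).
Qed.

Lemma line_XX_neq_YY x0 x y1 y2 : x0 \in X -> x \in X -> y1 \in Y -> y2 \in Y ->
  x0 != x -> y1 != y2 ->
  [\/ ~~ e x0 y1, exists2 z, z \in Z & ~~ e x0 z | complete_to_compl e X] ->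
  line e x0 x != line e y1 y2.
Proof.
move=> Hx0 Hx Hy1 Hy2 Hx0x Hy12 Hcase.
case Hadj: (e x0 y1 && e x0 y2); last by apply: line_XX_neq_YY_nadj; rewrite ?Hadj.
have /andP [Hx0y1 Hx0y2] := Hadj.
case Hcn: (has_common_nbr e x0 x); last first.
  apply: (set_neq_mem (w := x)); rewrite mem_lineR (mem_line_YY_X tp Hy1 Hy2 Hx Hy12).
  apply/negP => /andP [Hxy1 _]; have Hy1x : e y1 x by rewrite (adj_sym tp).
  by rewrite (common_nbrI Hx0y1 Hy1x) in Hcn.
case: Hcase => [|[z Hz Hx0z]|Hcompl]; first by rewrite Hx0y1.
  apply: (set_neq_mem (w := z)); rewrite (mem_line_YY_Z tp Hy1 Hy2 Hz Hy12).
  by rewrite (mem_line_XX_out tp Hx0 Hx _ Hx0x) ?(notX_Z tp Hz) // Hcn (negbTE Hx0z).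
have [HX|/subsetPn [x'' Hx'' Hx''X]] := boolP (X \subset [set x0; x]).
  exfalso; apply: (line_not_univ Hx0x) => w; case: (boolP (w \in X)) => Hw.
    by rewrite (mem_line_XX_X tp Hx0 Hx Hw Hx0x) -in_set2 (subsetP HX).
  by rewrite (mem_line_XX_out tp Hx0 Hx Hw Hx0x) Hcn (Hcompl _ _ Hx0 Hw) (Hcompl _ _ Hx Hw).
apply: (set_neq_mem (w := x'')).
rewrite (mem_line_XX_X tp Hx0 Hx Hx'' Hx0x) -in_set2 (negbTE Hx''X).
rewrite (mem_line_YY_X tp Hy1 Hy2 Hx'' Hy12).
by rewrite !(Hcompl _ _ Hx'') // (notX_Y tp Hy1, notX_Y tp Hy2).
Qed.

Lemma line_XX_neq_YZ x0 x y z : x0 \in X -> x \in X -> y \in Y -> z \in Z -> x0 != x ->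
  e x0 y -> e x0 z -> line e x0 x != line e y z.
Proof.
move=> Hx0 Hx Hy Hz Hx0x Hx0y Hx0z; apply: (set_neq_mem (w := x0)).
by rewrite mem_lineL (mem_line_YZ_X tp Hy Hz Hx0) Hx0y Hx0z.
Qed.

Lemma line_XY_neq_XZ x y z : x \in X -> y \in Y -> z \in Z -> e x y -> e x z ->
  line e x y != line e x z.
Proof.
move=> Hx Hy Hz Hxy Hxz; apply: (set_neq_mem (w := y)).
by rewrite mem_lineR (mem_line_XY_Z tp' Hx Hz Hy) Hxy Hxz.
Qed.

Lemma line_XY_neq_YY x y y1 y2 z : x \in X -> y \in Y -> y1 \in Y -> y2 \in Y -> z \in Z ->
  y1 != y2 -> e x z = e x y -> line e x y != line e y1 y2.
Proof.
move=> Hx Hy Hy1 Hy2 Hz Hy12 Hxz; apply: (set_neq_mem (w := z)).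
by rewrite (mem_line_XY_Z tp Hx Hy Hz) (mem_line_YY_Z tp Hy1 Hy2 Hz Hy12) Hxz eqxx.
Qed.

Lemma line_XY_neq_YZ x y y' z' z : x \in X -> y \in Y -> y' \in Y -> z' \in Z -> z \in Z ->
  e x z = e x y -> line e x y != line e y' z'.
Proof.
move=> Hx Hy Hy' Hz' Hz Hxz; apply: (set_neq_mem (w := z)).
by rewrite (mem_line_XY_Z tp Hx Hy Hz) (mem_line_YZ_out tp Hy' Hz') ?(notX_Z tp Hz) // Hxz eqxx.
Qed.

Lemma line_XY_neq_ZZ x y z1 z2 : x \in X -> y \in Y -> z1 \in Z -> z2 \in Z ->
  z1 != z2 -> e x y -> line e x y != line e z1 z2.
Proof.
move=> Hx Hy Hz1 Hz2 Hz12 Hxy.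
case Hadj: (e x z1 && e x z2).
- have /andP [Hxz1 _] := Hadj; apply: (set_neq_mem (w := z1)).
  by rewrite (mem_line_XY_Z tp Hx Hy Hz1) mem_lineL Hxz1 Hxy.
- apply: (set_neq_mem (w := x)).
  by rewrite mem_lineL (mem_line_YY_X tp' Hz1 Hz2 Hx Hz12) Hadj.
Qed.

Lemma line_XY_injr x y y' : x \in X -> y \in Y -> y' \in Y -> y != y' -> ~~ e x y' ->
  line e x y != line e x y'.
Proof.
move=> Hx Hy Hy' Hyy' Hxy'; apply: (set_neq_mem (w := y)).
by rewrite mem_lineR (mem_line_XY_Y tp Hx Hy' Hy) (negbTE Hxy') (negbTE Hyy').
Qed.

Lemma line_XZ_neq_XY x0 x y z : x0 \in X -> x \in X -> y \in Y -> z \in Z -> x != x0 ->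
  e x0 z -> e x z -> ~~ e x0 y -> line e x0 z != line e x0 y.
Proof.
move=> Hx0 Hx Hy Hz Hxx0 Hx0z Hxz Hx0y; apply: (set_neq_mem (w := x)).
rewrite (mem_line_XY_X tp' Hx0 Hz Hx) (mem_line_XY_X tp Hx0 Hy Hx) Hx0z (negbTE Hx0y).
have Hcn : has_common_nbr e x0 x by apply: (common_nbrI Hx0z); rewrite (adj_sym tp).
by rewrite Hcn (negbTE Hxx0) Hxz andbF.
Qed.

Lemma line_ZZ_neq_YZ x z1 z2 y z : x \in X -> z1 \in Z -> z2 \in Z -> y \in Y -> z \in Z ->
  z1 != z2 -> e x z1 -> e x z2 -> e x y = e x z -> line e z1 z2 != line e y z.
Proof.
move=> Hx Hz1 Hz2 Hy Hz Hz12 Hxz1 Hxz2 Hxyz; apply: (set_neq_mem (w := x)).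
by rewrite (mem_line_YY_X tp' Hz1 Hz2 Hx Hz12) (mem_line_YZ_X tp Hy Hz Hx) Hxz1 Hxz2 Hxyz eqxx.
Qed.

Lemma line_YY_neq_YZ y1 y2 y z : y1 \in Y -> y2 \in Y -> y \in Y -> z \in Z -> y1 != y2 ->
  line e y1 y2 != line e y z.
Proof.
move=> Hy1 Hy2 Hy Hz Hy12.
have [HY|/subsetPn [u Hu Hu12]] := boolP (Y \subset [set y1; y2]); last first.
  apply: (set_neq_mem (w := u)); rewrite (mem_line_YY_Y tp Hy1 Hy2 Hu Hy12) -in_set2.
  by rewrite (negbTE Hu12) (mem_line_YZ_out tp Hy Hz) ?(notX_Y tp Hu).
wlog -> : y1 y2 Hy1 Hy2 Hy12 HY / y = y1.
  move=> sym; case/set2P: (subsetP HY _ Hy) => Ey; first exact: sym.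
  by rewrite lineC; apply: sym; rewrite 1?eq_sym // setUC.
(* Y = {y1, y2}: if the lines coincide, then line y2 z is universal. *)
have Hy2z : y2 != z by rewrite (neq_mem Hy2 (notY_Z tp Hz)).
apply/eqP => Eline; apply: (line_not_univ Hy2z) => w.
case: (boolP (w \in X)) => Hw; last exact: (mem_line_YZ_out tp Hy2 Hz).
move/setP: Eline => /(_ w); move: (nbr_pairY tp HY Hw).
rewrite (mem_line_YY_X tp Hy1 Hy2 Hw Hy12) !(mem_line_YZ_X tp _ Hz Hw) //.
by case: (e w y1); case: (e w y2); case: (e w z).
Qed.

Lemma line_YZ_injr y z1 z2 : y \in Y -> z1 \in Z -> z2 \in Z -> z1 != z2 ->
  Z \subset [set z1; z2] -> line e y z1 != line e y z2.
Proof.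
move=> Hy Hz1 Hz2 Hz12 HZ; apply/eqP => Eline; apply: (line_not_univ Hz12) => w.
case: (partP tp w) => Hw.
- move/setP: Eline => /(_ w); move: (nbr_pairY tp' HZ Hw).
  rewrite !(mem_line_YZ_X tp Hy _ Hw) // (mem_line_YY_X tp' Hz1 Hz2 Hw Hz12).
  by case: (e w y); case: (e w z1); case: (e w z2).
- exact: (mem_line_YY_Z tp' Hz1 Hz2 Hw Hz12).
- by rewrite (mem_line_YY_Y tp' Hz1 Hz2 Hw Hz12) -in_set2 (subsetP HZ).
Qed.

Lemma line_YY_neq_ZZ_of_card y1 y2 z1 z2 : y1 \in Y -> y2 \in Y -> z1 \in Z -> z2 \in Z ->
  y1 != y2 -> z1 != z2 -> 2 < #|Y| -> line e y1 y2 != line e z1 z2.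
Proof.
move=> Hy1 Hy2 Hz1 Hz2 Hy12 Hz12 HY3.
have [HY|/subsetPn [u Hu Hu12]] := boolP (Y \subset [set y1; y2]).
  by have := subset_leq_card HY; rewrite cards2 Hy12 leqNgt HY3.
apply: (set_neq_mem (w := u)); rewrite (mem_line_YY_Y tp Hy1 Hy2 Hu Hy12) -in_set2 (negbTE Hu12).
by rewrite (mem_line_YY_Z tp' Hz1 Hz2 Hu Hz12).
Qed.

End DistinctLines.

Lemma line_YY_neq_ZZ (T : finType) (e : rel T) (X Y Z : {set T}) y1 y2 z1 z2 :
  tripartite e X Y Z -> y1 \in Y -> y2 \in Y -> z1 \in Z -> z2 \in Z -> y1 != y2 -> z1 != z2 ->
  (#|Y| != 2) || (#|Z| != 2) -> line e y1 y2 != line e z1 z2.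
Proof.
move=> tp Hy1 Hy2 Hz1 Hz2 Hy12 Hz12.
have gt1 (A : {set T}) a b : a \in A -> b \in A -> a != b -> 1 < #|A|.
  by move=> Ha Hb Hab; apply/card_gt1P; exists a, b.
case/orP => Hcard.
  by apply: (line_YY_neq_ZZ_of_card tp) => //; rewrite ltn_neqAle eq_sym Hcard (gt1 _ y1 y2).
rewrite eq_sym; apply: (line_YY_neq_ZZ_of_card (tripartite_swap tp)) => //.
by rewrite ltn_neqAle eq_sym Hcard (gt1 _ z1 z2).
Qed.

Section Star.
Variables (T : finType) (e : rel T) (X Y Z : {set T}).
Hypothesis tp : tripartite e X Y Z.
Hypothesis no_univ : forall a b, a != b -> line e a b != [set: T].
Let tp' := tripartite_swap tp.
Variables (x0 y0 z0 y1 : T).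
Hypotheses (Hx0 : x0 \in X) (Hy0 : y0 \in Y) (Hz0 : z0 \in Z) (Hy1 : y1 \in Y).
Hypotheses (Hx0y0 : e x0 y0) (Hx0z0 : e x0 z0).
(* Hy1_nbr keeps the pencils through y1 and z0 apart from the pencil through x0,
   and Hcard keeps the pencils through y1 and z0 apart from each other. *)
Hypothesis Hy1_nbr : ~~ e x0 y1 \/ complete_to_compl e X.
Hypothesis Hcard : (#|Y| != 2) || (#|Z| != 2).

Definition star_rank v :=
  if v == x0 then 0 else if v \in X then 1 else if v == y1 then 2
  else if v \in Y then 3 else if v == z0 then 4 else 5.

Definition star v :=
  match star_rank v with
  | 0 => line e y0 z0 | 1 => line e x0 v | 2 => line e x0 y0
  | 3 => line e y1 v | 4 => line e x0 z0 | _ => line e z0 v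
  end.

Variant star_spec v : nat -> {set T} -> Type :=
  | StarX0 of v = x0 : star_spec v 0 (line e y0 z0)
  | StarX of v \in X & x0 != v : star_spec v 1 (line e x0 v)
  | StarY1 of v = y1 : star_spec v 2 (line e x0 y0)
  | StarY of v \in Y & y1 != v : star_spec v 3 (line e y1 v)
  | StarZ0 of v = z0 : star_spec v 4 (line e x0 z0)
  | StarZ of v \in Z & z0 != v : star_spec v 5 (line e z0 v).

Lemma starP v : star_spec v (star_rank v) (star v).
Proof.
rewrite /star /star_rank; case: eqVneq => [->|Nx0]; first exact: StarX0.
case: ifP => HX; first by apply: StarX; rewrite // eq_sym.
case: eqVneq => [->|Ny1]; first exact: StarY1.
case: ifP => HY; first by apply: StarY; rewrite // eq_sym.
case: eqVneq => [->|Nz0]; first exact: StarZ0.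
by apply: StarZ; rewrite 1?eq_sym //; case: (partP tp v); rewrite ?HX ?HY.
Qed.

Lemma star_in_lines v : star v \in lines e.
Proof.
case: (starP v) => [_|_ ?|_|_ ?|_|_ ?]; apply: line_in_lines => //.
- by rewrite (neq_mem Hy0 (notY_Z tp Hz0)).
- by rewrite (neq_mem Hx0 (notX_Y tp Hy0)).
- by rewrite (neq_mem Hx0 (notX_Z tp Hz0)).
Qed.

Lemma star_inj : injective star.
Proof.
have HCY : [\/ ~~ e x0 y1, exists2 z, z \in Z & ~~ e x0 z | complete_to_compl e X].
  by case: Hy1_nbr => H; [constructor 1 | constructor 3].
have HCZ : [\/ ~~ e x0 z0, exists2 y, y \in Y & ~~ e x0 y | complete_to_compl e X].
  by case: Hy1_nbr => H; [constructor 2; exists y1 | constructor 3].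
apply: (inj_by_rank (r := star_rank)) => u v.
case: (starP u) => [->|Hu Nu|->|Hu Nu|->|Hu Nu];
  case: (starP v) => [->|Hv Nv|->|Hv Nv|->|Hv Nv] //= _ Nuv.
- by rewrite eqxx in Nuv.
- by rewrite eq_sym (line_XX_neq_YZ tp).
- by rewrite eq_sym (line_XY_neq_YZ tp (z := z0)) // Hx0y0.
- by rewrite eq_sym (line_YY_neq_YZ tp no_univ).
- by rewrite (lineC tp y0) eq_sym (line_XY_neq_YZ tp' (z := y0)) // Hx0y0.
- by rewrite (lineC tp y0) eq_sym (line_YY_neq_YZ tp' no_univ).
- exact: (line_injr_sparse (sparse_X tp)).
- exact: (line_XX_neq_XY tp).
- exact: (line_XX_neq_YY tp no_univ).
- exact: (line_XX_neq_XY tp').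
- exact: (line_XX_neq_YY tp' no_univ).
- by rewrite eqxx in Nuv.
- by apply: (line_XY_neq_YY tp (z := z0)); rewrite ?Hx0y0.
- exact: (line_XY_neq_XZ tp).
- exact: (line_XY_neq_ZZ tp).
- exact: (line_injr_sparse (sparse_Y tp)).
- by rewrite eq_sym (line_XY_neq_ZZ tp').
- exact: (line_YY_neq_ZZ tp).
- by rewrite eqxx in Nuv.
- by apply: (line_XY_neq_YY tp' (z := y0)); rewrite ?Hx0y0.
- exact: (line_injr_sparse (sparse_Y tp')).
Qed.

Lemma card_lines_star : #|T| <= #|lines e|.
Proof. exact: leq_card_lines star_inj star_in_lines. Qed.

End Star.

Section TwoTwo.
Variables (T : finType) (e : rel T) (X Y Z : {set T}).
Hypothesis tp : tripartite e X Y Z.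
Let tp' := tripartite_swap tp.
Variables (x0 y1 y2 z1 z2 : T).
Hypotheses (Hx0 : x0 \in X) (Hy1 : y1 \in Y) (Hz1 : z1 \in Z).
Hypotheses (HY : Y \subset [set y1; y2]) (HZ : Z \subset [set z1; z2]).
Hypotheses (Hx0y1 : e x0 y1) (Hx0z1 : e x0 z1).

(* When Y = {y1, y2} and Z = {z1, z2}, the injection is fixed except for the
   images L0 of x0 and L5 of z2, which depend on how X is joined to Y and Z. *)
Definition fresh_line (L : {set T}) :=
  [/\ L \in lines e, forall x, x \in X -> x0 != x -> line e x0 x != L,
     L != line e x0 y1, L != line e x0 z1 & L != line e y1 z1].

Variables (L0 L5 : {set T}).
Hypotheses (fresh0 : fresh_line L0) (fresh5 : fresh_line L5) (L05 : L0 != L5).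

Definition two_two_rank v :=
  if v == x0 then 0 else if v \in X then 1 else if v == y1 then 2
  else if v == y2 then 3 else if v == z1 then 4 else 5.

Definition two_two v :=
  match two_two_rank v with
  | 0 => L0 | 1 => line e x0 v | 2 => line e x0 y1
  | 3 => line e x0 z1 | 4 => line e y1 z1 | _ => L5
  end.

Variant two_two_spec v : nat -> {set T} -> Type :=
  | TwoX0 of v = x0 : two_two_spec v 0 L0
  | TwoX of v \in X & x0 != v : two_two_spec v 1 (line e x0 v)
  | TwoY1 of v = y1 : two_two_spec v 2 (line e x0 y1)
  | TwoY2 of v = y2 : two_two_spec v 3 (line e x0 z1)
  | TwoZ1 of v = z1 : two_two_spec v 4 (line e y1 z1)
  | TwoZ2 of v = z2 : two_two_spec v 5 L5.

Lemma two_twoP v : two_two_spec v (two_two_rank v) (two_two v).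
Proof.
rewrite /two_two /two_two_rank; case: eqVneq => [->|Nx0]; first exact: TwoX0.
case: ifP => HX; first by apply: TwoX; rewrite // eq_sym.
case: eqVneq => [->|Ny1]; first exact: TwoY1.
case: eqVneq => [->|Ny2]; first exact: TwoY2.
case: eqVneq => [->|Nz1]; first exact: TwoZ1.
apply: TwoZ2; case: (partP tp v) => Hv; first by rewrite Hv in HX.
- by move/(subsetP HY): Hv; rewrite !inE (negbTE Ny1) (negbTE Ny2).
- by move/(subsetP HZ): Hv; rewrite !inE (negbTE Nz1) => /eqP.
Qed.

Lemma two_two_in_lines v : two_two v \in lines e.
Proof.
case: (two_twoP v) => [_|_ ?|_|_|_|_]; try apply: line_in_lines => //.
- by case: fresh0.
- by rewrite (neq_mem Hx0 (notX_Y tp Hy1)).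
- by rewrite (neq_mem Hx0 (notX_Z tp Hz1)).
- by rewrite (neq_mem Hy1 (notY_Z tp Hz1)).
- by case: fresh5.
Qed.

Lemma two_two_inj : injective two_two.
Proof.
case: fresh0 => _ pencil0 N02 N03 N04; case: fresh5 => _ pencil5 N25 N35 N45.
apply: (inj_by_rank (r := two_two_rank)) => u v.
case: (two_twoP u) => [->|Hu Nu|->|->|->|->];
  case: (two_twoP v) => [->|Hv Nv|->|->|->|->] //= _ Nuv;
  try by rewrite eqxx in Nuv.
- by rewrite eq_sym pencil0.
- exact: (line_injr_sparse (sparse_X tp)).
- exact: (line_XX_neq_XY tp).
- exact: (line_XX_neq_XY tp').
- exact: (line_XX_neq_YZ tp).
- exact: pencil5.
- exact: (line_XY_neq_XZ tp).
- by apply: (line_XY_neq_YZ tp (z := z1)); rewrite ?Hx0y1 ?Hx0z1.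
- by rewrite eq_sym.
- by rewrite (lineC tp y1); apply: (line_XY_neq_YZ tp' (z := y1)); rewrite ?Hx0y1 ?Hx0z1.
- by rewrite eq_sym.
- by rewrite eq_sym.
Qed.

Lemma card_lines_two_two : #|T| <= #|lines e|.
Proof. exact: leq_card_lines two_two_inj two_two_in_lines. Qed.

End TwoTwo.

Section TwoTwoCases.
Variables (T : finType) (e : rel T) (X Y Z : {set T}).
Hypothesis tp : tripartite e X Y Z.
Hypothesis no_univ : forall a b, a != b -> line e a b != [set: T].
Let tp' := tripartite_swap tp.
Variables (y1 y2 z1 z2 : T).
Hypotheses (Hy1 : y1 \in Y) (Hy2 : y2 \in Y) (Hz1 : z1 \in Z) (Hz2 : z2 \in Z).
Hypotheses (Hy12 : y1 != y2) (Hz12 : z1 != z2).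
Hypotheses (HY : Y \subset [set y1; y2]) (HZ : Z \subset [set z1; z2]).

Lemma card_lines_mixedY_fullZ x0 : x0 \in X -> e x0 y1 -> ~~ e x0 y2 -> e x0 z1 -> e x0 z2 ->
  #|T| <= #|lines e|.
Proof.
move=> Hx0 Hx0y1 Hx0y2 Hx0z1 Hx0z2.
have Hy1z2 : y1 != z2 by rewrite (neq_mem Hy1 (notY_Z tp Hz2)).
apply: (card_lines_two_two tp Hx0 Hy1 Hz1 HY HZ Hx0y1 Hx0z1
  (L0 := line e z1 z2) (L5 := line e y1 z2)).
- split; first exact: line_in_lines.
  + move=> x Hx Hx0x; apply: (line_XX_neq_YY tp' no_univ) => //.
    by constructor 2; exists y2.
  + by rewrite eq_sym (line_XY_neq_ZZ tp).
  + by rewrite eq_sym; apply: (line_XY_neq_YY tp' (z := y1)); rewrite ?Hx0y1.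
  + by apply: (line_ZZ_neq_YZ tp Hx0); rewrite ?Hx0y1.
- split; first exact: line_in_lines.
  + by move=> x Hx Hx0x; apply: (line_XX_neq_YZ tp).
  + by rewrite eq_sym; apply: (line_XY_neq_YZ tp (z := z2)); rewrite ?Hx0y1.
  + by rewrite eq_sym (lineC tp y1); apply: (line_XY_neq_YZ tp' (z := y1)); rewrite ?Hx0y1.
  + by rewrite eq_sym (line_YZ_injr tp no_univ) // eq_sym.
- by apply: (line_ZZ_neq_YZ tp Hx0); rewrite ?Hx0y1.
Qed.

Lemma card_lines_mixed_shared x0 x : x0 \in X -> x \in X -> x != x0 ->
  e x0 y1 -> ~~ e x0 y2 -> e x0 z1 -> ~~ e x0 z2 -> e x z1 -> #|T| <= #|lines e|.
Proof.
move=> Hx0 Hx Hxx0 Hx0y1 Hx0y2 Hx0z1 Hx0z2 Hxz1.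
have Hx0y2' : x0 != y2 by rewrite (neq_mem Hx0 (notX_Y tp Hy2)).
apply: (card_lines_two_two tp Hx0 Hy1 Hz1 HY HZ Hx0y1 Hx0z1
  (L0 := line e y1 y2) (L5 := line e x0 y2)).
- split; first exact: line_in_lines.
  + by move=> x' Hx' Hx0x'; apply: (line_XX_neq_YY_nadj tp); rewrite ?(negbTE Hx0y2) ?andbF.
  + by rewrite eq_sym; apply: (line_XY_neq_YY tp (z := z1)); rewrite ?Hx0y1.
  + by rewrite eq_sym (line_XY_neq_ZZ tp').
  + exact: (line_YY_neq_YZ tp no_univ).
- split; first exact: line_in_lines.
  + by move=> x' Hx' Hx0x'; apply: (line_XX_neq_XY tp).
  + by rewrite eq_sym (line_XY_injr tp).
  + by rewrite eq_sym (line_XZ_neq_XY tp Hx0 Hx).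
  + by apply: (line_XY_neq_YZ tp (z := z2)); rewrite ?(negbTE Hx0y2) ?(negbTE Hx0z2).
- by rewrite eq_sym; apply: (line_XY_neq_YY tp (z := z2)); rewrite ?(negbTE Hx0y2) ?(negbTE Hx0z2).
Qed.

End TwoTwoCases.

Section TwoTwoAnalysis.
Variables (T : finType) (e : rel T) (X Y Z : {set T}).
Hypothesis tp : tripartite e X Y Z.
Hypothesis no_univ : forall a b, a != b -> line e a b != [set: T].
Let tp' := tripartite_swap tp.

Lemma card_lines_mixed_both y1 y2 z1 z2 x0 :
  y1 \in Y -> y2 \in Y -> z1 \in Z -> z2 \in Z -> y1 != y2 -> z1 != z2 ->
  Y \subset [set y1; y2] -> Z \subset [set z1; z2] -> x0 \in X ->
  e x0 y1 -> ~~ e x0 y2 -> e x0 z1 -> ~~ e x0 z2 -> #|T| <= #|lines e|.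
Proof.
move=> Hy1 Hy2 Hz1 Hz2 Hy12 Hz12 HY HZ Hx0 Hx0y1 Hx0y2 Hx0z1 Hx0z2.
case: (pickP [pred x | [&& x \in X, x != x0 & e x z1]]) => [x /and3P [Hx Hxx0 Hxz1]|noZ].
  exact: (card_lines_mixed_shared tp no_univ Hy1 Hy2 Hz1 Hz2 Hy12 HY HZ Hx0 Hx Hxx0).
case: (pickP [pred x | [&& x \in X, x != x0 & e x y1]]) => [x /and3P [Hx Hxx0 Hxy1]|noY].
  exact: (card_lines_mixed_shared tp' no_univ Hz1 Hz2 Hy1 Hy2 Hz12 HZ HY Hx0 Hx Hxx0).
(* Otherwise every vertex of X other than x0 sees y2 and z2 only, and then
   line y1 z2 is universal. *)
have Hy1z2 : y1 != z2 by rewrite (neq_mem Hy1 (notY_Z tp Hz2)).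
exfalso; apply: (line_not_univ no_univ Hy1z2) => w.
case: (boolP (w \in X)) => Hw; last exact: (mem_line_YZ_out tp Hy1 Hz2).
rewrite (mem_line_YZ_X tp Hy1 Hz2 Hw).
case: (eqVneq w x0) => [->|Hwx0]; first by rewrite Hx0y1 (negbTE Hx0z2).
have Hwy1 : e w y1 = false by move: (noY w); rewrite /= Hw Hwx0.
have Hwz1 : e w z1 = false by move: (noZ w); rewrite /= Hw Hwx0.
by move: (nbr_pairY tp' HZ Hw); rewrite Hwy1 Hwz1 => /= ->.
Qed.

Lemma card_lines_pairs y1 y2 z1 z2 :
  y1 \in Y -> y2 \in Y -> z1 \in Z -> z2 \in Z -> y1 != y2 -> z1 != z2 ->
  Y \subset [set y1; y2] -> Z \subset [set z1; z2] -> #|T| <= #|lines e|.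
Proof.
(* A vertex of X adjacent to exactly one of y1, y2 is adjacent to one or both
   of z1, z2; if there is no such vertex, line y1 y2 is universal. *)
move=> Hy1 Hy2 Hz1 Hz2 Hy12 Hz12 HY HZ.
case: (pickP [pred x | (x \in X) && (e x y1 != e x y2)]) => [x0 /andP [Hx0 Hmix]|Hfull].
  wlog Hx0y1 : y1 y2 Hy1 Hy2 Hy12 HY Hmix / e x0 y1.
    move=> sym; case Hx0y1: (e x0 y1); first exact: (sym y1 y2).
    apply: (sym y2 y1); rewrite 1?setUC 1?eq_sym //.
    by move: Hmix; rewrite Hx0y1; case: (e x0 y2).
  have Hx0y2 : ~~ e x0 y2 by move: Hmix; rewrite Hx0y1; case: (e x0 y2).
  case Hz: (e x0 z1 && e x0 z2).
    case/andP: Hz => Hx0z1 Hx0z2.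
    exact: (card_lines_mixedY_fullZ tp no_univ Hy1 Hy2 Hz1 Hz2 Hz12 HY HZ Hx0
      Hx0y1 Hx0y2 Hx0z1 Hx0z2).
  wlog Hx0z1 : z1 z2 Hz1 Hz2 Hz12 HZ Hz / e x0 z1.
    move=> sym; case Hx0z1: (e x0 z1); first exact: (sym z1 z2).
    apply: (sym z2 z1); rewrite 1?setUC 1?eq_sym 1?andbC //.
    by case/orP: (nbr_pairY tp' HZ Hx0); rewrite ?Hx0z1.
  have Hx0z2 : ~~ e x0 z2 by move: Hz; rewrite Hx0z1 => /= ->.
  exact: (card_lines_mixed_both Hy1 Hy2 Hz1 Hz2 Hy12 Hz12 HY HZ Hx0).
exfalso; apply: (line_not_univ no_univ Hy12) => w; case: (partP tp w) => Hw.
- rewrite (mem_line_YY_X tp Hy1 Hy2 Hw Hy12); move: (Hfull w) (nbr_pairY tp HY Hw).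
  by rewrite /= Hw; case: (e w y1); case: (e w y2).
- by rewrite (mem_line_YY_Y tp Hy1 Hy2 Hw Hy12) -in_set2 (subsetP HY).
- exact: (mem_line_YY_Z tp Hy1 Hy2 Hw Hy12).
Qed.

End TwoTwoAnalysis.

Lemma card_lines_star_at (T : finType) (e : rel T) (X Y Z : {set T}) x0 y1 :
  tripartite e X Y Z -> (forall a b, a != b -> line e a b != [set: T]) ->
  x0 \in X -> y1 \in Y -> ~~ e x0 y1 \/ complete_to_compl e X ->
  (#|Y| != 2) || (#|Z| != 2) -> #|T| <= #|lines e|.
Proof.
move=> tp no_univ Hx0 Hy1 Hy1_nbr Hcard.
have [y0 Hy0 Hx0y0] := tp_nbrY tp Hx0; have [z0 Hz0 Hx0z0] := tp_nbrZ tp Hx0.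
exact: (card_lines_star tp no_univ Hx0 Hy0 Hz0 Hy1 Hx0y0 Hx0z0 Hy1_nbr Hcard).
Qed.

Section Count.
Variables (T : finType) (e : rel T) (X Y Z : {set T}).
Hypothesis tp : tripartite e X Y Z.
Hypothesis no_univ : forall a b, a != b -> line e a b != [set: T].
Let tp' := tripartite_swap tp.

Lemma card_lines_tripartite : X != set0 -> #|T| <= #|lines e|.
Proof.
move=> /set0Pn [x1 Hx1].
have [/andP [/cards2P [y1 [y2 [Hy12 EY]]] /cards2P [z1 [z2 [Hz12 EZ]]]]|Hcard] :=
  boolP ((#|Y| == 2) && (#|Z| == 2)).
  by apply: (card_lines_pairs tp no_univ (y1 := y1) (y2 := y2) (z1 := z1) (z2 := z2));
    rewrite ?EY ?EZ ?set21 ?set22.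
rewrite negb_and in Hcard.
case: (pickP [pred xy | [&& xy.1 \in X, xy.2 \in Y & ~~ e xy.1 xy.2]]) =>
  [[x0 y1] /and3P [Hx0 Hy1 Hx0y1]|fullY].
  exact: (card_lines_star_at tp no_univ Hx0 Hy1 (or_introl Hx0y1)).
case: (pickP [pred xz | [&& xz.1 \in X, xz.2 \in Z & ~~ e xz.1 xz.2]]) =>
  [[x0 z1] /and3P [Hx0 Hz1 Hx0z1]|fullZ].
  by apply: (card_lines_star_at tp' no_univ Hx0 Hz1 (or_introl Hx0z1)); rewrite orbC.
have Hcompl : complete_to_compl e X.
  move=> u w Hu Hw; case: (partP tp w) => Hw'; first by rewrite Hw' in Hw.
  - by move: (fullY (u, w)); rewrite /= Hu Hw' => /negbFE.
  - by move: (fullZ (u, w)); rewrite /= Hu Hw' => /negbFE.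
have [y0 Hy0 _] := tp_nbrY tp Hx1.
exact: (card_lines_star_at tp no_univ Hx1 Hy0 (or_intror Hcompl)).
Qed.

End Count.

Theorem proposition1 (T : finType) (e : rel T) (X Y Z : {set T}) :
  simple_graph e ->
  connected_graph e ->
  (* X, Y, Z partition V(G) into (nonempty) blocks *)
  X != set0 -> Y != set0 -> Z != set0 ->
  [disjoint X & Y] -> [disjoint Y & Z] -> [disjoint X & Z] ->
  X :|: Y :|: Z = [set: T] ->
  stable e X -> stable e Y -> stable e Z ->
  (forall y z, y \in Y -> z \in Z -> e y z) ->
  (forall x, x \in X -> (exists2 y, y \in Y & e x y) /\ (exists2 z, z \in Z & e x z)) ->
  dBE_property e.
Proof.
move=> [Hsym _] _ HX0 HY0 HZ0 HXY HYZ HXZ Hcov HsX HsY HsZ HadjYZ Hnbr.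
have tp : tripartite e X Y Z by split => // x /Hnbr [].
case: (pickP [pred ab : T * T | (ab.1 != ab.2) && universal_line e (line e ab.1 ab.2)]) =>
  [[a b] /andP [Hab Huniv]|no_univ]; first by left; exists a, b.
right; apply: (card_lines_tripartite tp _ HX0) => a b Hab.
by move: (no_univ (a, b)); rewrite /= Hab => /negbT.
Qed.
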